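(* For every binary relation $S$ on $\Sigma^*$ there is an ECRPQ($S$) query $\phi(x,x')$ and a deterministic logarithmic-space algorithm that, given $R\in\mathsf{REG}_2$ over $\Sigma$, constructs a labeled graph $G$ and two nodes $v,v'$ such that $G\models\phi(v,v')$ if and only if $R\cap S\neq\emptyset$.
   Context: $\Sigma$ is a finite alphabet, $\Sigma_\bot=\Sigma\cup\{\bot\}$ with $\bot\notin\Sigma$. For $(w_1,\dots,w_n)\in(\Sigma^* )^n$, $w_1\otimes\cdots\otimes w_n$ is the word over $\Sigma_\bot^n$ of length $\max_i|w_i|$ whose $k$-th letter is the tuple of $k$-th letters of the $w_i$, with $\bot$ used when $|w_i|<k$. $\mathsf{REG}_n$ is the class of $R\subseteq(\Sigma^* )^n$ such that some NFA over $\Sigma_\bot^n$ accepts exactly $\{w_1\otimes\cdots\otimes w_n:(w_1,\dots,w_n)\in R\}$; they are given by such NFAs. The graph may be labeled over an alphabet extending $\Sigma$ (e.g. containing $\Sigma_\bot\times\Sigma_\bot$ and fresh symbols), and $S$ is regarded as a relation on words over this alphabet. Labeled graphs, paths, labels, and ECRPQ($S$) queries $\exists\bar y(\bigwedge_i(u_i\xrightarrow{\chi_i:L_i}u_i')\wedge\bigwedge_j R_j(\bar\chi_j)\wedge\bigwedge_{(i,j)\in I}S(\chi_i,\chi_j))$ (with $L_i$ regular languages and $R_j$ regular relations) are as usual: satisfaction requires nodes for $\bar y$ and paths $\rho_i$ from $u_i$ to $u_i'$ with label in $L_i$, such that label tuples satisfy every $R_j$ atom and every $S$ atom. *)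

From HB Require Import structures.
From mathcomp Require Import all_boot.
Set Implicit Arguments. Unset Strict Implicit. Unset Printing Implicit Defensive.

Record nfa (A : finType) := Nfa {
  ntrans : seq (nat * A * nat);
  ninit  : seq nat;
  nfin   : seq nat }.

Definition nfa0 (A : finType) : nfa A := Nfa [::] [::] [::].

Fixpoint nfa_reach (A : finType) (M : nfa A) (p : nat) (w : seq A) (q : nat) : Prop :=
  match w with
  | [::] => p = q
  | a :: w' => exists r, ((p, a, r) \in ntrans M) /\ nfa_reach M r w' q
  end.

Definition nfa_accepts (A : finType) (M : nfa A) (w : seq A) : Prop :=
  exists p q, p \in ninit M /\ q \in nfin M /\ nfa_reach M p w q.

(* Convolution w_1 (x) ... (x) w_n, letters of Sigma_bot^n being        *)
(* functions 'I_n -> option A  (None plays the role of bot).            *)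
Definition conv (A : finType) (n : nat) (ws : 'I_n -> seq A)
  : seq {ffun 'I_n -> option A} :=
  [seq [ffun i => onth (ws i) k] | k <- iota 0 (\max_(i < n) size (ws i))].

Definition conv2 (A : finType) (w1 w2 : seq A) : seq {ffun 'I_2 -> option A} :=
  conv (fun i : 'I_2 => if val i == 0 then w1 else w2).

(* An NFA over Sigma_bot^2 presents a relation in REG_2 iff every word it *)
(* accepts is a convolution; the relation is then the following one.    *)
Definition reg2_nfa (A : finType) (M : nfa {ffun 'I_2 -> option A}) : Prop :=
  forall u, nfa_accepts M u -> exists w1 w2, u = conv2 w1 w2.

Definition rel_of2 (A : finType) (M : nfa {ffun 'I_2 -> option A}) (w1 w2 : seq A) : Prop :=
  nfa_accepts M (conv2 w1 w2).

Record graph (G : finType) := Graph {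
  gn : nat;
  gedges : seq (nat * G * nat) }.

Definition graph_wf (G : finType) (g : graph G) : Prop :=
  forall e, e \in gedges g -> (e.1.1 < gn g) /\ (e.2 < gn g).

Fixpoint is_path (G : finType) (g : graph G) (u : nat) (p : seq (nat * G * nat)) (u' : nat) : Prop :=
  match p with
  | [::] => u = u'
  | e :: p' => e \in gedges g /\ e.1.1 = u /\ is_path g e.2 p' u'
  end.

Definition plabel (G : finType) (p : seq (nat * G * nat)) : seq G := [seq e.1.2 | e <- p].

(* Node variables are natural numbers; variable 0 is x, variable 1 is x', *)
(* all other node variables are existentially quantified (the y's).     *)
(* Path variables chi_i are indexed by the position i of the reachability *)
(* atom (u_i -chi_i:L_i-> u_i') in q_paths.                              *)
Record ecrpq (G : finType) := Ecrpq {
  q_paths : seq (nat * nfa G * nat);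
  q_rels  : seq {n : nat & (nfa {ffun 'I_n -> option G} * ('I_n -> nat))%type};
  q_S     : seq (nat * nat) }.

Definition rel_atom0 (G : finType) : {n : nat & (nfa {ffun 'I_n -> option G} * ('I_n -> nat))%type} :=
  existT _ 0 (nfa0 _, fun _ => 0).

Definition ecrpq_wf (G : finType) (phi : ecrpq G) : Prop :=
  (forall k, k < size (q_rels phi) ->
     forall i, (projT2 (nth (rel_atom0 G) (q_rels phi) k)).2 i < size (q_paths phi)) /\
  (forall ij, ij \in q_S phi -> ij.1 < size (q_paths phi) /\ ij.2 < size (q_paths phi)).

Definition lift_rel (Sigma G : finType) (iota : Sigma -> G)
  (S : seq Sigma -> seq Sigma -> Prop) (u1 u2 : seq G) : Prop :=
  exists w1 w2, u1 = map iota w1 /\ u2 = map iota w2 /\ S w1 w2.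

Definition ecrpq_sat (G : finType) (SG : seq G -> seq G -> Prop)
  (g : graph G) (phi : ecrpq G) (v v' : nat) : Prop :=
  exists nu : nat -> nat,
    nu 0 = v /\ nu 1 = v' /\ (forall y, nu y < gn g) /\
    exists rho : nat -> seq (nat * G * nat),
      (forall i, i < size (q_paths phi) ->
         let: (u, L, u') := nth (0, nfa0 G, 0) (q_paths phi) i in
         is_path g (nu u) (rho i) (nu u') /\ nfa_accepts L (plabel (rho i))) /\
      (forall k, k < size (q_rels phi) ->
         let: existT n (R, chis) := nth (rel_atom0 G) (q_rels phi) k in
         nfa_accepts R (conv (fun j : 'I_n => plabel (rho (chis j))))) /\
      (forall ij, ij \in q_S phi -> SG (plabel (rho ij.1)) (plabel (rho ij.2))).

(* Deterministic logarithmic-space transducers: a deterministic Turing   *)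
(* machine with a read-only two-way input tape (with end markers), one   *)
(* read/write work tape (one-way infinite, blank-initialised) and a     *)
(* write-only one-way output tape.                                       *)
Inductive esym := eOne | eHash | eSemi.
Inductive cell := LM | RM | Ch of esym.
Inductive move := mL | mS | mR.

Record TM := Tm {
  tQ : finType;
  tW : finType;
  tblank : tW;
  tq0 : tQ;
  (* None = halt *)
  tdelta : tQ -> cell -> tW -> option (tQ * tW * move * move * option esym) }.

Record config (M : TM) := Config {
  cq : tQ M; cin : nat; cwork : seq (tW M); cwh : nat; cout : seq esym }.

Definition init_config (M : TM) : config M := Config (tq0 M) 0 [::] 0 [::].

Definition read_in (x : seq esym) (i : nat) : cell :=
  if i == 0 then LM else if i <= size x then Ch (nth eOne x i.-1) else RM.

Definition move_in (x : seq esym) (i : nat) (m : move) : nat :=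
  match m with mL => i.-1 | mS => i | mR => minn i.+1 (size x).+1 end.

Definition move_work (i : nat) (m : move) : nat :=
  match m with mL => i.-1 | mS => i | mR => i.+1 end.

Definition step (M : TM) (x : seq esym) (c : config M) : option (config M) :=
  match tdelta (cq c) (read_in x (cin c)) (nth (tblank M) (cwork c) (cwh c)) with
  | None => None
  | Some (q', w, mi, mw, o) =>
      Some (Config q' (move_in x (cin c) mi)
                   (set_nth (tblank M) (cwork c) (cwh c) w)
                   (move_work (cwh c) mw)
                   (cout c ++ (if o is Some s then [:: s] else [::])))
  end.

Fixpoint steps (M : TM) (x : seq esym) (n : nat) (c : config M) : config M :=
  match n with
  | 0 => c
  | n'.+1 => match step x c with Some c' => steps x n' c' | None => c end
  end.

(* On input x, M halts with output y, never moving its work head beyond  *)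
(* cell s (i.e. using at most s+1 work cells).                           *)
Definition computes_in_space (M : TM) (x y : seq esym) (s : nat) : Prop :=
  exists n,
    step x (steps x n (init_config M)) = None /\
    cout (steps x n (init_config M)) = y /\
    forall k, k <= n -> cwh (steps x k (init_config M)) <= s.

(* Encodings (unary numbers, self-delimiting, injective).               *)
Definition enat (n : nat) : seq esym := nseq n eOne ++ [:: eHash].
Definition elist (T : Type) (f : T -> seq esym) (l : seq T) : seq esym :=
  flatten (map f l) ++ [:: eSemi].
Definition esymb (A : finType) (a : A) : seq esym := enat (enum_rank a).
Definition etrans (A : finType) (t : nat * A * nat) : seq esym :=
  enat t.1.1 ++ esymb t.1.2 ++ enat t.2.

Definition enc_nfa (A : finType) (M : nfa A) : seq esym :=
  elist (@etrans A) (ntrans M) ++ elist enat (ninit M) ++ elist enat (nfin M).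

Definition enc_graph_nodes (G : finType) (g : graph G) (v v' : nat) : seq esym :=
  enat (gn g) ++ elist (@etrans G) (gedges g) ++ enat v ++ enat v'.

(* Given S, the graph alphabet Gam consists of the letters of Sigma_bot^2,
   the letters of Sigma, and two markers start and end.  From an automaton A
   presenting R we build a graph with two distinguished nodes v, v': a copy
   of A whose states hang between v (edges labelled start into the initial
   states) and v' (edges labelled end out of the final states), plus one
   self-loop at v for each letter of Sigma.  The fixed query phi(x, x')
   guesses a run of A from x to x' (path chi_1) and two loop paths chi_3,
   chi_4 at x, and requires chi_1 = chi_3 (x) chi_4 through a ternary
   regular relation, and S(chi_3, chi_4).  Hence phi holds iff some pair of
   R lies in S (reduction_sound, reduction_complete); this works for any
   automaton, whether or not it only accepts convolutions.

   The
   construction of the graph is carried out by a two-way transducer with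
   string outputs and no work tape (one counting pass, one translating
   pass); such transducers are compiled generically into Turing machines
   that never use their work tape, so the reduction runs in logarithmic
   (indeed constant) work space. *)

From Pilot Require Import Defs.
From HB Require Import structures.
From mathcomp Require Import all_boot zify.
(* Imported again so that [esym] denotes the tape alphabet, not ssrfun's lemma. *)
From Pilot Require Import Defs.
Set Implicit Arguments. Unset Strict Implicit. Unset Printing Implicit Defensive.

(* Ranks in a sum type: the left summand is enumerated first, so an [inl a]
   has the same rank as [a]; this lets the reduction copy letter codes. *)
Lemma enum_rank_inl (T1 T2 : finType) (a : T1) :
  val (enum_rank (inl a : (T1 + T2)%type)) = val (enum_rank a).
Proof.
have rank_index (T : finType) (y : T) : val (enum_rank y) = index y (enum T).
  rewrite /enum_rank enum_rank_in.unlock insubdK //.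
  by rewrite unfold_in /= cardE index_mem mem_enum.
rewrite !rank_index [X in index _ X]enumT unlock /= /sum_enum -!enumT.
by rewrite index_cat map_f ?mem_enum // index_map // => b c [].
Qed.

Lemma onth_conv (T : finType) n (ws : 'I_n -> seq T) k :
  onth (conv ws) k =
  if k < \max_(i < n) size (ws i) then Some [ffun i => onth (ws i) k] else None.
Proof.
rewrite /conv onth_map onthE; case: ltnP => hk.
  by rewrite (nth_map 0) ?size_iota // nth_iota.
by rewrite nth_default // size_map size_iota.
Qed.

Lemma conv_ext (T : finType) n (ws ws' : 'I_n -> seq T) :
  ws =1 ws' -> conv ws = conv ws'.
Proof.
move=> E; rewrite /conv (eq_bigr (fun i => size (ws' i))) => [|i _]; last by rewrite E.
by apply: eq_map => k; apply/ffunP => i; rewrite !ffunE E.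
Qed.

Lemma all_conv (T : finType) n (ws : 'I_n -> seq T) (P : pred {ffun 'I_n -> option T}) :
  all P (conv ws) <->
  (forall k, k < \max_(i < n) size (ws i) -> P [ffun i => onth (ws i) k]).
Proof.
rewrite /conv all_map; split.
  by move=> /allP H k hk; apply: H; rewrite mem_iota.
by move=> H; apply/allP => k; rewrite mem_iota add0n /= => /H.
Qed.

(* The letter of [w1 (x) w2] built from two optional letters: it is absent
   exactly when both components are exhausted. *)
Definition pack (A : finType) (o1 o2 : option A) : option {ffun 'I_2 -> option A} :=
  if o1 || o2 then Some [ffun i : 'I_2 => if val i == 0 then o1 else o2] else None.

Lemma onth_conv2 (A : finType) (w1 w2 : seq A) k :
  onth (conv2 w1 w2) k = pack (onth w1 k) (onth w2 k).
Proof.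
rewrite /conv2 onth_conv big_ord_recl big_ord1 /pack /= leq_max -!onthTE.
case: ifP => // _; congr Some; apply/ffunP => i; rewrite !ffunE; by case: ifP.
Qed.

Definition nfa_letter (A : finType) (a : A) : nfa A := Nfa [:: (0, a, 1)] [:: 0] [:: 1].

Lemma nfa_letterP (A : finType) (a : A) u : nfa_accepts (nfa_letter a) u <-> u = [:: a].
Proof.
split; last first.
  by move=> ->; exists 0, 1; rewrite /= ?inE; do 2!split => //; exists 1; rewrite inE.
rewrite /nfa_accepts /=; case=> p [q [hp [hq]]].
rewrite !inE in hp hq; move/eqP: hp => ->; move/eqP: hq => ->.
case: u => [|b [|c u]] //=.
- by case=> r [/[!inE] /eqP[-> ->]].
- by case=> r [/[!inE] /eqP[_ ->]] [r' [/[!inE] /eqP[]]].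
Qed.

Definition nfa_all (A : finType) (P : pred A) : nfa A :=
  Nfa [seq (0, a, 0) | a <- enum A & P a] [:: 0] [:: 0].

Lemma nfa_allP (A : finType) (P : pred A) u : nfa_accepts (nfa_all P) u <-> all P u.
Proof.
have letterP a r : ((0, a, r) \in ntrans (nfa_all P)) = P a && (r == 0).
  apply/mapP/andP => [[b]|[Pa /eqP->]]; last by exists a; rewrite // mem_filter Pa mem_enum.
  by rewrite mem_filter => /andP[Pb _] [-> ->].
split.
  rewrite /nfa_accepts /=; case=> p [q [/[!inE] /eqP-> [_]]].
  elim: u => //= a u IH [r [/[!letterP] /andP[-> /eqP Er] R]].
  by rewrite Er in R; exact: IH.
move=> Pu; exists 0, 0; rewrite /= ?inE; do 2!split => //.
by elim: u Pu => //= a u IH /andP[Pa Pu]; exists 0; rewrite letterP Pa; split; last exact: IH.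
Qed.

Section Query.
Variable Sigma : finType.

Definition letter2 : finType := {ffun 'I_2 -> option Sigma}.

(* The graph alphabet: letters of Sigma_bot^2, letters of Sigma, and two
   markers for the entry into and the exit from the copy of the automaton. *)
Definition Gam : finType := (letter2 + (Sigma + bool))%type.
Definition iotaG (a : Sigma) : Gam := inr (inl a).
Definition startL : Gam := inr (inr true).
Definition endL : Gam := inr (inr false).

Definition projG (g : Gam) : option Sigma := if g is inr (inl a) then Some a else None.

Lemma iotaG_inj : injective iotaG.
Proof. by move=> a b [->]. Qed.

Definition triple (T : Type) (b c d : seq T) (j : 'I_3) : seq T := nth [::] [:: b; c; d] j.

(* A letter (b, c, d) of Gam_bot^3 is admissible when b is the pair of
   Sigma-letters carried by c and d, seen as a letter of the automaton. *)
Definition pair_letter (h : {ffun 'I_3 -> option Gam}) : bool :=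
  h ord0 == omap inl (pack (obind projG (h (inord 1))) (obind projG (h (inord 2)))).

Lemma all_pair_letter (b : seq Gam) (w1 w2 : seq Sigma) :
  all pair_letter (conv (triple b (map iotaG w1) (map iotaG w2))) <->
  b = map inl (conv2 w1 w2).
Proof.
have size_conv2 : size (conv2 w1 w2) = maxn (size w1) (size w2).
  by rewrite /conv2 /conv size_map size_iota big_ord_recl big_ord1.
rewrite all_conv big_ord_recl big_ord_recl big_ord1 /triple /= !size_map.
rewrite -size_conv2 -(size_map (@inl letter2 (Sigma + bool)%type)).
apply: iff_trans (eq_onthP 1 0); rewrite /pair_letter.
have projK (o : option Sigma) : obind projG (omap iotaG o) = o by case: o.
split=> H k /H; rewrite !ffunE !inordK //= !(@onth_map Sigma) !projK -onth_conv2 onth_map.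
  by move/eqP.
by move=> ->.
Qed.

(* The query phi(x, x'):  x -chi_0:start-> y_2 -chi_1-> y_3 -chi_2:end-> x',
   two arbitrary paths chi_3, chi_4 from x to x, the relation
   chi_1 = chi_3 (x) chi_4 (lifted to the graph alphabet) and S(chi_3, chi_4). *)
Definition chi_args (j : 'I_3) : nat := nth 0 [:: 1; 3; 4] j.

Definition phi : ecrpq Gam :=
  Ecrpq [:: (0, nfa_letter startL, 2); (2, nfa_all predT, 3); (3, nfa_letter endL, 1);
            (0, nfa_all predT, 0); (0, nfa_all predT, 0)]
        [:: existT (fun n => (nfa {ffun 'I_n -> option Gam} * ('I_n -> nat))%type) 3
              (nfa_all pair_letter, chi_args)]
        [:: (3, 4)].

Lemma conv_chi_args (rho : nat -> seq (nat * Gam * nat)) :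
  conv (fun j : 'I_3 => plabel (rho (chi_args j))) =
  conv (triple (plabel (rho 1)) (plabel (rho 3)) (plabel (rho 4))).
Proof. by apply: conv_ext => -[[|[|[|m]]] hm]. Qed.

Lemma phi_wf : ecrpq_wf phi.
Proof.
split; first by case=> // _ [[|[|[|m]]] hm].
by move=> ij; rewrite inE => /eqP ->.
Qed.

End Query.

Lemma size_flatten_mem (T : eqType) (f : T -> seq esym) (l : seq T) y :
  y \in l -> size (f y) <= size (flatten (map f l)).
Proof.
elim: l => //= z l IH; rewrite inE size_cat => /orP[/eqP->|/IH h].
  exact: leq_addr.
exact: leq_trans h (leq_addl _ _).
Qed.

Lemma single_edge (G : finType) (g : graph G) u r v (l : G) :
  is_path g u r v -> plabel r = [:: l] -> (u, l, v) \in gedges g.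
Proof.
by case: r => [|[[u0 l0] v0] [|e r]] //= [he [<- <-]] [<-].
Qed.

Definition loop_edges (Sigma : finType) : seq (nat * Gam Sigma * nat) :=
  [seq (0, iotaG a, 0) | a <- enum Sigma].

Section Reduction.
Variable Sigma : finType.
Variable A : nfa (letter2 Sigma).
Local Notation Gam := (Gam Sigma).

(* The graph built from A: node 0 is v, node 1 is v', node p+2 is the state
   p of A; A's transitions are copied, v enters the initial states with the
   letter start, the final states exit to v' with the letter end, and v
   carries a loop for every letter of Sigma.  All states of A are smaller
   than the size of its encoding, which gives the number of nodes. *)
Definition trans_edges : seq (nat * Gam * nat) :=
  [seq (t.1.1.+2, inl t.1.2, t.2.+2) | t <- ntrans A].
Definition init_edges : seq (nat * Gam * nat) := [seq (0, startL Sigma, p.+2) | p <- ninit A].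
Definition fin_edges : seq (nat * Gam * nat) := [seq (q.+2, endL Sigma, 1) | q <- nfin A].

Definition red_graph : graph Gam :=
  Graph (size (enc_nfa A)).+2 (trans_edges ++ init_edges ++ fin_edges ++ loop_edges Sigma).

Local Notation g := red_graph.

Lemma red_edgeP e : e \in gedges g ->
  [\/ exists2 t, t \in ntrans A & e = (t.1.1.+2, inl t.1.2, t.2.+2),
      exists2 p, p \in ninit A & e = (0, startL Sigma, p.+2),
      exists2 q, q \in nfin A & e = (q.+2, endL Sigma, 1) |
      exists a, e = (0, iotaG a, 0)].
Proof.
rewrite !mem_cat => /or4P[] /mapP[y y_in ->]; last by apply: Or44; exists y.
- by apply: Or41; exists y.
- by apply: Or42; exists y.
- by apply: Or43; exists y.
Qed.

Lemma trans_bound t : t \in ntrans A -> t.1.1 < size (enc_nfa A) /\ t.2 < size (enc_nfa A).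
Proof.
move=> /(size_flatten_mem (@etrans _)); case: t => [[p a] q].
rewrite /enc_nfa /elist /etrans /esymb /enat !size_cat !size_nseq /=; lia.
Qed.

Lemma state_bound (l : seq nat) p : p \in l ->
  size (flatten (map enat l)) <= size (enc_nfa A) -> p < size (enc_nfa A).
Proof. by move=> /(size_flatten_mem enat); rewrite size_cat size_nseq /=; lia. Qed.

Lemma init_bound p : p \in ninit A -> p < size (enc_nfa A).
Proof. by move/state_bound; apply; rewrite /enc_nfa /elist !size_cat; lia. Qed.

Lemma fin_bound q : q \in nfin A -> q < size (enc_nfa A).
Proof. by move/state_bound; apply; rewrite /enc_nfa /elist !size_cat; lia. Qed.

Lemma red_graph_wf : graph_wf g.
Proof.
move=> e /red_edgeP[[t /trans_bound ht ->]|[p /init_bound hp ->]|[q /fin_bound hq ->]|[a ->]] //=.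
Qed.

Lemma start_edge u v : (u, startL Sigma, v) \in gedges g -> exists2 p, p \in ninit A & v = p.+2.
Proof. by case/red_edgeP=> [[t _]|[p p_in [_ ->]]|[q _]|[a]] //; exists p. Qed.

Lemma end_edge u v : (u, endL Sigma, v) \in gedges g -> exists2 q, q \in nfin A & u = q.+2.
Proof. by case/red_edgeP=> [[t _]|[p _]|[q q_in [-> _]]|[a]] //; exists q. Qed.

Lemma red_pathP p u q :
  nfa_reach A p u q <-> exists2 rho, is_path g p.+2 rho q.+2 & plabel rho = map inl u.
Proof.
split.
  elim: u p => [|a u IH] p /=; first by move=> ->; exists [::].
  case=> r [hr /IH[rho P L]]; exists ((p.+2, inl a, r.+2) :: rho); last by rewrite /= L.
  split; last by split.
  by rewrite /= mem_cat; apply/orP; left; apply/mapP; exists (p, a, r).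
case=> rho; elim: rho p u => [|e rho IH] p [|b u] //=; first by move=> [->].
move=> [/red_edgeP he [Ep P]] [Eb Eu].
case: he => [[[[p' a] r] t_in Ee]|[p' _ Ee]|[q' _ Ee]|[a Ee]]; rewrite Ee /= in Ep Eb P;
  try discriminate.
case: Eb Ep => <- [<-]; exists r; split; [exact: t_in | exact: IH P Eu].
Qed.

Definition loops (w : seq Sigma) : seq (nat * Gam * nat) := [seq (0, iotaG a, 0) | a <- w].

Lemma loops_path w : is_path g 0 (loops w) 0.
Proof.
elim: w => //= a w IH; split; last by split.
by rewrite !mem_cat (map_f (fun a => (0, iotaG a, 0))) ?mem_enum ?orbT.
Qed.

Lemma plabel_loops w : plabel (loops w) = map (@iotaG Sigma) w.
Proof. by rewrite /plabel /loops -map_comp. Qed.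

Lemma reduction_sound (S : seq Sigma -> seq Sigma -> Prop) :
  ecrpq_sat (lift_rel (@iotaG Sigma) S) g (phi Sigma) 0 1 ->
  exists w1 w2, rel_of2 A w1 w2 /\ S w1 w2.
Proof.
case=> nu [nu0 [nu1 [_ [rho [paths [rels SS]]]]]].
have [P0 /nfa_letterP /(single_edge P0) E0] := paths 0 isT.
have [P1 _] := paths 1 isT.
have [P2 /nfa_letterP /(single_edge P2) E2] := paths 2 isT.
have [p p_init Ep] := start_edge E0.
have [q q_fin Eq] := end_edge E2.
have [w1 [w2 [L3 [L4 Sw]]]] := SS (3, 4) (mem_head _ _).
have := rels 0 isT; rewrite /= conv_chi_args L3 L4 nfa_allP all_pair_letter => L1.
exists w1, w2; split=> //; exists p, q; do 2!split => //.
by apply/red_pathP; exists (rho 1); rewrite -?Ep -?Eq.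
Qed.

Lemma reduction_complete (S : seq Sigma -> seq Sigma -> Prop) w1 w2 :
  rel_of2 A w1 w2 -> S w1 w2 ->
  ecrpq_sat (lift_rel (@iotaG Sigma) S) g (phi Sigma) 0 1.
Proof.
case=> p [q [p_init [q_fin /red_pathP[r Pr Lr]]]] Sw.
exists (nth 0 [:: 0; 1; p.+2; q.+2]); do 2!split => //; split.
  by case=> [|[|[|[|y]]]] //=; rewrite ?nth_nil // !ltnS ?(init_bound p_init) ?(fin_bound q_fin).
exists (nth [::] [:: [:: (0, startL Sigma, p.+2)]; r; [:: (q.+2, endL Sigma, 1)];
                   loops w1; loops w2]).
split; last split.
- case=> [|[|[|[|[|i]]]]] //= _.
  + split; last exact/nfa_letterP; split; last by split.
    by rewrite !mem_cat (map_f (fun p => (0, startL Sigma, p.+2))) ?orbT.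
  + by split; last exact/nfa_allP/all_predT.
  + split; last exact/nfa_letterP; split; last by split.
    by rewrite !mem_cat (map_f (fun q => (q.+2, endL Sigma, 1))) ?orbT.
  + by split; [exact: loops_path | exact/nfa_allP/all_predT].
  + by split; [exact: loops_path | exact/nfa_allP/all_predT].
- case=> // _; rewrite /= conv_chi_args !plabel_loops Lr.
  by apply/nfa_allP/all_pair_letter.
- by move=> ij; rewrite inE => /eqP-> /=; exists w1, w2; rewrite !plabel_loops.
Qed.

End Reduction.

Lemma read_in_cat x pre a rest :
  x = pre ++ a :: rest -> read_in x (size pre).+1 = Ch a.
Proof.
move=> ->; rewrite /read_in /=.
have -> : (size pre).+1 <= size (pre ++ a :: rest) by rewrite size_cat /=; lia.
by rewrite nth_cat ltnn subnn.
Qed.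

(* Two-way transducers with a read-only input tape, no work tape, and
   transitions that may output a whole string.  Such a machine is simulated
   by a TM that emits the string one symbol per step, remembering its
   position in the string in the control state.  The TM never moves its work
   head, so it runs in every space bound. *)
Section StringMachine.
Variables (St : finType) (q0 : St) (delta : St -> cell -> option (St * seq esym * move)).
Variable B : nat.
Hypothesis delta_bound : forall q c q' s m, delta q c = Some (q', s, m) -> size s <= B.

Definition sm_delta (qj : St * 'I_B.+1) (c : cell) (_ : unit) :
    option ((St * 'I_B.+1) * unit * move * move * option esym) :=
  let: (q, j) := qj in
  match delta q c with
  | None => None
  | Some (q', s, m) =>
      if j < size s then Some ((q, inord j.+1), tt, mS, mS, Some (nth eOne s j))
      else Some ((q', inord 0), tt, m, mS, None)
  end.

Definition sm_tm : TM := @Tm (St * 'I_B.+1)%type unit tt (q0, inord 0) sm_delta.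

Variable x : seq esym.

Inductive srun : St -> nat -> seq esym -> St -> nat -> Prop :=
| srun_nil q i : srun q i [::] q i
| srun_cons q i s q' m y q'' i' :
    delta q (read_in x i) = Some (q', s, m) ->
    srun q' (move_in x i m) y q'' i' -> srun q i (s ++ y) q'' i'.

Lemma srun_cat q i y1 q1 i1 y2 q2 i2 :
  srun q i y1 q1 i1 -> srun q1 i1 y2 q2 i2 -> srun q i (y1 ++ y2) q2 i2.
Proof.
elim=> // {}q {}i s q' m y q'' i' D _ IH /IH R.
by rewrite -catA; apply: srun_cons D R.
Qed.

Lemma srun_step q i s q' m :
  delta q (read_in x i) = Some (q', s, m) -> srun q i s q' (move_in x i m).
Proof. by move=> D; rewrite -[s]cats0; apply: srun_cons D (srun_nil _ _). Qed.

Lemma srun_conv q i y q' i' z j : srun q i y q' i' -> y = z -> i' = j -> srun q i z q' j.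
Proof. by move=> R <- <-. Qed.

Lemma srun_read pre a rest q s q' :
  x = pre ++ a :: rest -> delta q (Ch a) = Some (q', s, mR) ->
  srun q (size pre).+1 s q' (size (pre ++ [:: a])).+1.
Proof.
move=> Ex D; have -> : (size (pre ++ [:: a])).+1 = move_in x (size pre).+1 mR.
  by rewrite Ex /= !size_cat /=; lia.
by apply: srun_step; rewrite (read_in_cat Ex).
Qed.

Lemma srun_unary q q' suf k pre rest :
  delta q (Ch eOne) = Some (q, [:: eOne], mR) ->
  delta q (Ch eHash) = Some (q', eHash :: suf, mR) ->
  x = pre ++ enat k ++ rest ->
  srun q (size pre).+1 (enat k ++ suf) q' (size (pre ++ enat k)).+1.
Proof.
move=> D1 D2; elim: k pre => [|k IH] pre Ex; first exact: srun_read Ex D2.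
have R1 := srun_read Ex D1.
have Ex' : x = (pre ++ [:: eOne]) ++ enat k ++ rest by rewrite Ex -catA.
have R2 := IH _ Ex'.
by have := srun_cat R1 R2; rewrite -!catA.
Qed.

Local Notation cfg q j i w o := (@Config sm_tm (q, inord j) i w 0 o).

Lemma steps_cat a b (c : config sm_tm) : steps x (a + b) c = steps x b (steps x a c).
Proof.
have halted n c' : step x c' = None -> steps x n c' = c' by case: n => //= n ->.
elim: a c => //= a IH c.
by case E: (step x c) => [c'|]; [exact: IH | rewrite halted].
Qed.

Lemma emit_steps q i q' s m j w o :
  delta q (read_in x i) = Some (q', s, m) -> j <= size s ->
  exists k w', steps x k (cfg q j i w o) = cfg q' 0 (move_in x i m) w' (o ++ drop j s).
Proof.
move=> D; have sB := delta_bound D.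
elim: {j}(size s - j) {-2}j (erefl (size s - j)) w o => [|n IH] j En w o hj.
  have -> : j = size s by lia.
  exists 1, (set_nth tt w 0 tt).
  by rewrite /= /step /= D inordK ?ltnn ?drop_size ?cats0 //; lia.
have hjs : j < size s by lia.
have [k [w' E]] := IH j.+1 ltac:(lia) (set_nth tt w 0 tt) (o ++ [:: nth eOne s j]) hjs.
exists k.+1, w'; rewrite /= /step /= D inordK; last lia.
by rewrite hjs /= E (drop_nth eOne hjs) -catA.
Qed.

Lemma srun_steps q i y q' i' w o : srun q i y q' i' ->
  exists k w', steps x k (cfg q 0 i w o) = cfg q' 0 i' w' (o ++ y).
Proof.
move=> R; elim: R w o => [{}q {}i|{}q {}i s q1 m y1 q2 i2 D _ IH] w o.
  by exists 0, w; rewrite cats0.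
have [k1 [w1 E1]] := emit_steps w o D (leq0n _).
have [k2 [w2 E2]] := IH w1 (o ++ s).
by exists (k1 + k2), w2; rewrite steps_cat E1 drop0 E2 catA.
Qed.

Lemma steps_work_head k (c : config sm_tm) : cwh c = 0 -> cwh (steps x k c) = 0.
Proof.
elim: k c => //= k IH [[q j] i w h o] /= h0; rewrite /step /=.
case: (delta q _) => [[[q' s] m]|] //; case: ifP => _; exact: IH.
Qed.

Lemma srun_computes y q i s : srun q0 0 y q i -> delta q (read_in x i) = None ->
  computes_in_space sm_tm x y s.
Proof.
move=> R halt; have [k [w E]] := srun_steps [::] [::] R.
exists k; rewrite E; split; first by rewrite /step /= halt.
by split=> // k' _; rewrite steps_work_head.
Qed.

End StringMachine.

(* Control states of the reduction machine: it first writes the number of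
   nodes (the number of input-tape cells, end markers included), rewinds, and then
   translates the three sections of the encoding of A in a single sweep. *)
Inductive rstate :=
  Count | Rewind | TransStart | TransSrc | TransLetter | TransDst
| InitStart | InitState | FinStart | FinState | Done.

Definition rstate_code (q : rstate) : 'I_11 :=
  inord match q with
  | Count => 0 | Rewind => 1 | TransStart => 2 | TransSrc => 3 | TransLetter => 4
  | TransDst => 5 | InitStart => 6 | InitState => 7 | FinStart => 8 | FinState => 9
  | Done => 10
  end.

Definition rstate_decode (i : 'I_11) : option rstate :=
  nth None [seq Some q | q <- [:: Count; Rewind; TransStart; TransSrc; TransLetter;
    TransDst; InitStart; InitState; FinStart; FinState; Done]] (nat_of_ord i).

Lemma rstate_codeK : pcancel rstate_code rstate_decode.
Proof. by case; rewrite /rstate_decode inordK. Qed.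
#[warnings="-redundant-canonical-projection"]
HB.instance Definition _ := Finite.copy rstate (pcan_type rstate_codeK).

Section ReductionMachine.
Variable Sigma : finType.

(* Fixed output pieces: the tail of an initial edge (0, start, p+2) once
   p is known, the tail of a final edge (q+2, end, 1), and the loops at v
   followed by the encodings of v and v'. *)
Definition init_out : seq esym := enat 0 ++ esymb (startL Sigma) ++ [:: eOne; eOne].
Definition fin_out : seq esym := esymb (endL Sigma) ++ enat 1.
Definition last_out : seq esym :=
  flatten (map (@etrans _) (loop_edges Sigma)) ++ eSemi :: enat 0 ++ enat 1.

Definition unary (q next : rstate) (suf : seq esym) (c : cell) :=
  match c with
  | Ch eOne => Some (q, [:: eOne], mR)
  | Ch eHash => Some (next, eHash :: suf, mR)
  | _ => None
  end.

(* Prefixing [1 1] to a unary number adds 2 to it: state p becomes node p+2;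
   letter codes are copied unchanged thanks to [enum_rank_inl]. *)
Definition rdelta (q : rstate) (c : cell) : option (rstate * seq esym * move) :=
  match q, c with
  | Count, RM => Some (Rewind, [:: eOne; eHash], mL)
  | Count, _ => Some (Count, [:: eOne], mR)
  | Rewind, LM => Some (TransStart, [::], mR)
  | Rewind, _ => Some (Rewind, [::], mL)
  | TransStart, Ch eSemi => Some (InitStart, [::], mR)
  | TransStart, _ => Some (TransSrc, [:: eOne; eOne], mS)
  | TransSrc, c => unary TransSrc TransLetter [::] c
  | TransLetter, c => unary TransLetter TransDst [:: eOne; eOne] c
  | TransDst, c => unary TransDst TransStart [::] c
  | InitStart, Ch eSemi => Some (FinStart, [::], mR)
  | InitStart, _ => Some (InitState, init_out, mS)
  | InitState, c => unary InitState InitStart [::] c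
  | FinStart, Ch eSemi => Some (Done, last_out, mR)
  | FinStart, _ => Some (FinState, [:: eOne; eOne], mS)
  | FinState, c => unary FinState FinStart fin_out c
  | Done, _ => None
  end.

Definition rbound : nat := 3 + size init_out + size fin_out + size last_out.

Lemma rdelta_bound q c q' s m : rdelta q c = Some (q', s, m) -> size s <= rbound.
Proof. by case: q; case: c => [||[]] //= [_ <- _]; rewrite /rbound /=; lia. Qed.

Definition red_tm : TM := sm_tm Count rdelta rbound.

Variable x : seq esym.
Local Notation srun := (srun rdelta x).

Lemma count_run : srun Count 0 (enat (size x).+2) Rewind (size x).
Proof.
suff run n i : i + n = (size x).+1 -> srun Count i (enat n.+1) Rewind (size x).
  exact: run.
elim: n i => [|n IH] i Ei.
  rewrite addn0 in Ei; rewrite Ei.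
  have D : rdelta Count (read_in x (size x).+1) = Some (Rewind, [:: eOne; eHash], mL).
    by rewrite /read_in /= ltnn.
  exact: srun_step D.
have hi : i <= size x by lia.
have D : rdelta Count (read_in x i) = Some (Count, [:: eOne], mR).
  by rewrite /read_in; case: ifP => // _; rewrite hi.
apply: srun_cons D _; have -> : move_in x i mR = i.+1 by rewrite /=; lia.
by apply: IH; lia.
Qed.

Lemma rewind_run i : i <= size x -> srun Rewind i [::] TransStart 1.
Proof.
elim: i => [|i IH] hi.
  by apply: srun_conv (srun_step _) _ _; rewrite //= /read_in /=; lia.
have D : rdelta Rewind (read_in x i.+1) = Some (Rewind, [::], mL).
  by rewrite /read_in /=; case: ifP.
by apply: srun_cons D _; apply: IH; lia.
Qed.

Lemma read_in_enat pre k rest :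
  x = pre ++ enat k ++ rest ->
  read_in x (size pre).+1 = Ch eOne \/ read_in x (size pre).+1 = Ch eHash.
Proof. by case: k => [|k] Ex; rewrite (read_in_cat Ex); [right | left]. Qed.

Lemma trans_run (ts : seq (nat * letter2 Sigma * nat)) pre rest :
  x = pre ++ flatten (map (@etrans _) ts) ++ eSemi :: rest ->
  srun TransStart (size pre).+1
    (flatten (map (@etrans _) [seq (t.1.1.+2, inl t.1.2 : Gam Sigma, t.2.+2) | t <- ts]))
    InitStart (size (pre ++ flatten (map (@etrans _) ts) ++ [:: eSemi])).+1.
Proof.
elim: ts pre => [|[[p a] q] ts IH] pre Ex /=; first exact: srun_read Ex _.
have Ep : x = pre ++ enat p ++ (esymb a ++ enat q ++ flatten (map (@etrans _) ts) ++ eSemi :: rest).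
  by rewrite Ex /etrans -!catA.
have Ea : x = (pre ++ enat p) ++ enat (enum_rank a) ++ (enat q ++ flatten (map (@etrans _) ts) ++ eSemi :: rest).
  by rewrite Ep -!catA.
have Eq : x = ((pre ++ enat p) ++ enat (enum_rank a)) ++ enat q ++
               (flatten (map (@etrans _) ts) ++ eSemi :: rest).
  by rewrite Ea -!catA.
have Ets : x = (((pre ++ enat p) ++ enat (enum_rank a)) ++ enat q) ++
               flatten (map (@etrans _) ts) ++ eSemi :: rest.
  by rewrite Eq -!catA.
have R0 : srun TransStart (size pre).+1 [:: eOne; eOne] TransSrc (size pre).+1.
  by apply: (srun_step (m := mS)); case: (read_in_enat Ep) => ->.
have R1 := srun_unary (delta := rdelta) (q := TransSrc) (q' := TransLetter) (suf := [::]) erefl erefl Ep.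
have R2 := srun_unary (delta := rdelta) (q := TransLetter) (q' := TransDst) (suf := [:: eOne; eOne]) erefl erefl Ea.
have R3 := srun_unary (delta := rdelta) (q := TransDst) (q' := TransStart) (suf := [::]) erefl erefl Eq.
apply: srun_conv (srun_cat R0 (srun_cat R1 (srun_cat R2 (srun_cat R3 (IH _ Ets))))) _ _.
  by rewrite /etrans /esymb enum_rank_inl /= -!catA.
by rewrite /etrans /esymb -!catA.
Qed.

Lemma init_run (ps : seq nat) pre rest :
  x = pre ++ flatten (map enat ps) ++ eSemi :: rest ->
  srun InitStart (size pre).+1
    (flatten (map (@etrans _) [seq (0, startL Sigma, p.+2) | p <- ps]))
    FinStart (size (pre ++ flatten (map enat ps) ++ [:: eSemi])).+1.
Proof.
elim: ps pre => [|p ps IH] pre Ex /=; first exact: srun_read Ex _.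
have Ep : x = pre ++ enat p ++ (flatten (map enat ps) ++ eSemi :: rest) by rewrite Ex -!catA.
have Eps : x = (pre ++ enat p) ++ flatten (map enat ps) ++ eSemi :: rest by rewrite Ep -!catA.
have R0 : srun InitStart (size pre).+1 init_out InitState (size pre).+1.
  by apply: (srun_step (m := mS)); case: (read_in_enat Ep) => ->.
have R1 := srun_unary (delta := rdelta) (q := InitState) (q' := InitStart) (suf := [::]) erefl erefl Ep.
apply: srun_conv (srun_cat R0 (srun_cat R1 (IH _ Eps))) _ _.
  by rewrite /init_out /etrans -!catA.
by rewrite -!catA.
Qed.

Lemma fin_run (qs : seq nat) pre rest :
  x = pre ++ flatten (map enat qs) ++ eSemi :: rest ->
  srun FinStart (size pre).+1
    (flatten (map (@etrans _) [seq (q.+2, endL Sigma, 1) | q <- qs]) ++ last_out)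
    Done (size (pre ++ flatten (map enat qs) ++ [:: eSemi])).+1.
Proof.
elim: qs pre => [|q qs IH] pre Ex /=; first exact: srun_read Ex _.
have Eq : x = pre ++ enat q ++ (flatten (map enat qs) ++ eSemi :: rest) by rewrite Ex -!catA.
have Eqs : x = (pre ++ enat q) ++ flatten (map enat qs) ++ eSemi :: rest by rewrite Eq -!catA.
have R0 : srun FinStart (size pre).+1 [:: eOne; eOne] FinState (size pre).+1.
  by apply: (srun_step (m := mS)); case: (read_in_enat Eq) => ->.
have R1 := srun_unary (delta := rdelta) (q := FinState) (q' := FinStart) (suf := fin_out) erefl erefl Eq.
apply: srun_conv (srun_cat R0 (srun_cat R1 (IH _ Eqs))) _ _.
  by rewrite /fin_out /etrans -!catA.
by rewrite -!catA.
Qed.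

End ReductionMachine.

Lemma red_tm_computes (Sigma : finType) (A : nfa (letter2 Sigma)) s :
  computes_in_space (red_tm Sigma) (enc_nfa A) (enc_graph_nodes (red_graph A) 0 1) s.
Proof.
set T := flatten (map (@etrans _) (ntrans A)).
set I := flatten (map enat (ninit A)).
set F := flatten (map enat (nfin A)).
have ET : enc_nfa A = [::] ++ T ++ eSemi :: ((I ++ [:: eSemi]) ++ F ++ [:: eSemi]).
  by rewrite /enc_nfa /elist -!catA.
have EI : enc_nfa A = (T ++ [:: eSemi]) ++ I ++ eSemi :: (F ++ [:: eSemi]).
  by rewrite /enc_nfa /elist -!catA.
have EF : enc_nfa A = ((T ++ [:: eSemi]) ++ (I ++ [:: eSemi])) ++ F ++ eSemi :: [::].
  by rewrite /enc_nfa /elist -!catA.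
have R := srun_cat (count_run Sigma (enc_nfa A))
            (srun_cat (rewind_run Sigma (leqnn _))
            (srun_cat (trans_run ET) (srun_cat (init_run Sigma EI) (fin_run Sigma EF)))).
apply: (srun_computes (@rdelta_bound Sigma) s (srun_conv R _ erefl)); last first.
  by case: (read_in _ _).
by rewrite /enc_graph_nodes /elist /last_out !map_cat !flatten_cat -!catA.
Qed.

Theorem mainTheorem4 :
  forall (Sigma : finType) (S : seq Sigma -> seq Sigma -> Prop),
  exists (Gam : finType) (iota : Sigma -> Gam) (phi : ecrpq Gam),
    injective iota /\ ecrpq_wf phi /\
    exists (M : TM) (c : nat),
      forall A : nfa {ffun 'I_2 -> option Sigma},
        reg2_nfa A ->
        exists (g : graph Gam) (v v' : nat),
          graph_wf g /\ v < gn g /\ v' < gn g /\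
          computes_in_space M (enc_nfa A) (enc_graph_nodes g v v')
            (c * trunc_log 2 (size (enc_nfa A)) + c) /\
          (ecrpq_sat (lift_rel iota S) g phi v v' <->
             exists w1 w2, rel_of2 A w1 w2 /\ S w1 w2).
Proof.
move=> Sigma S.
exists (Gam Sigma), (@iotaG Sigma), (phi Sigma).
split; first exact: iotaG_inj.
split; first exact: phi_wf.
exists (red_tm Sigma), 1 => A _.
exists (red_graph A), 0, 1.
split; first exact: red_graph_wf.
do 2!split => //.
split; first exact: red_tm_computes.
split; first exact: reduction_sound.
by case=> w1 [w2 [R Sw]]; exact: reduction_complete R Sw.
Qed.
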